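(* A graph $G$ satisfies $\overline{\mu_\alpha}(G)\le 1$ if and only if $G$ is $\{\text{claw}, 2P_3\}$-free.
   Context: All graphs are finite, simple and undirected. For a graph $G$, $\alpha(G)$ is the maximum size of an independent set and $i(G)$ is the minimum size of a maximal (with respect to inclusion) independent set; the independence gap is $\mu_\alpha(G)=\alpha(G)-i(G)$. The hereditary independence gap is $\overline{\mu_\alpha}(G)=\max\{\mu_\alpha(H): H \text{ an induced subgraph of } G\}$. The claw is $K_{1,3}$; $P_3$ is the path on 3 vertices and $2P_3$ is the disjoint union of two copies of $P_3$. For a set $\mathcal F$ of graphs, $G$ is $\mathcal F$-free if no induced subgraph of $G$ is isomorphic to a member of $\mathcal F$. *)

(* A finite simple graph is a finType T with a symmetric,
   irreflexive adjacency relation e : rel T. *)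
From mathcomp Require Import all_boot.
Set Implicit Arguments. Unset Strict Implicit. Unset Printing Implicit Defensive.

Section Graphs.
Variables (T : finType) (e : rel T).

Definition independent (A : {set T}) : bool :=
  [forall x in A, forall y in A, ~~ e x y].

(* A is a maximal (w.r.t. inclusion) independent set of the induced subgraph G[S] *)
Definition maximal_independent_in (S A : {set T}) : bool :=
  [&& A \subset S, independent A &
      [forall x in S :\: A, ~~ independent (x |: A)]].

Definition alpha_in (S : {set T}) : nat :=
  \max_(A : {set T} | (A \subset S) && independent A) #|A|.

(* i(G[S]) : minimum size of a maximal independent set of G[S]
   (such a set always exists, so the default #|S| is never the answer
   unless it is attained). *)
Definition i_in (S : {set T}) : nat :=
  \big[minn/#|S|]_(A : {set T} | maximal_independent_in S A) #|A|.

Definition mu_in (S : {set T}) : nat := alpha_in S - i_in S.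

Definition hered_gap : nat := \max_(S : {set T}) mu_in S.

End Graphs.

Definition has_induced (V T : finType) (h : rel V) (e : rel T) : Prop :=
  exists f : V -> T, injective f /\ forall x y, e (f x) (f y) = h x y.

Definition claw : rel 'I_4 :=
  fun x y => ((val x == 0) && (val y != 0)) || ((val y == 0) && (val x != 0)).

Definition twoP3 : rel 'I_6 :=
  fun x y => (val x, val y) \in
    [:: (0,1); (1,0); (1,2); (2,1); (3,4); (4,3); (4,5); (5,4)].

(* A vertex outside a maximal independent set I is dominated by I.
   Given an independent set A, send each vertex of A \ I to a neighbour in I \ A.
   In a claw-free graph a vertex has at most two neighbours in the independent
   set A, so every fibre has at most two elements; a fibre with two elements is
   the whole neighbourhood of its image in A, and two such fibres over distinct
   (non-adjacent) vertices of I form an induced 2P3.  Hence |A \ I| <= |I \ A| + 1,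
   i.e. |A| <= |I| + 1 in every induced subgraph.  Conversely, a claw has
   alpha = 3 and i = 1, and 2P3 has alpha = 4 and i = 2. *)
From mathcomp Require Import all_boot all_order zify.
Set Implicit Arguments. Unset Strict Implicit. Unset Printing Implicit Defensive.
Import Order.TTheory.

Lemma sum_le_card_add1 (I : finType) (X : {set I}) (c : I -> nat) :
  {in X, forall x, c x <= 2} ->
  {in X &, forall x1 x2, 1 < c x1 -> 1 < c x2 -> x1 = x2} ->
  \sum_(x in X) c x <= #|X| + 1.
Proof.
move=> c_le2 c_uniq.
case: (boolP [exists x in X, 1 < c x]) => [/exists_inP [x0 x0X cx0] | no_big];
  last first.
  rewrite -sum1_card (leq_trans _ (leq_addr _ _)) // leq_sum // => x xX.
  by rewrite leqNgt; apply: contra no_big => cx; apply/exists_inP; exists x.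
rewrite (big_setD1 x0) //= (cardsD1 x0 X) x0X.
have rest : \sum_(x in X :\ x0) c x <= #|X :\ x0|.
  rewrite -sum1_card leq_sum // => x /setD1P [xx0 xX].
  by rewrite leqNgt; apply: contra xx0 => cx; apply/eqP/c_uniq.
by have := c_le2 x0 x0X; lia.
Qed.

Lemma independentP (T : finType) (e : rel T) (A : {set T}) :
  reflect {in A &, forall x y, ~~ e x y} (independent e A).
Proof.
apply: (iffP forall_inP) => [indA x y xA yA | indA x xA].
  by have /forall_inP := indA x xA; apply.
by apply/forall_inP => y; apply: indA.
Qed.

Section Graphs.
Variables (T : finType) (e : rel T).
Hypotheses (e_sym : symmetric e) (e_irr : irreflexive e).

Lemma maximal_independentP (S I : {set T}) :
  maximal_independent_in e S I <->
  [/\ I \subset S, independent e I &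
      {in S :\: I, forall x, exists2 y, y \in I & e x y}].
Proof.
split => [/and3P [IS indI /forall_inP maxI] | [IS indI domI]].
  split=> // x xSI; apply/exists_inP; apply: contraNT (maxI x xSI).
  move=> /exists_inPn not_dom; move/independentP: indI => indI.
  apply/independentP => u v.
  rewrite !inE => /predU1P [-> | uI] /predU1P [-> | vI].
  - by rewrite e_irr.
  - exact: not_dom.
  - by rewrite e_sym; apply: not_dom.
  - exact: indI.
apply/and3P; split=> //; apply/forall_inP => x /domI [y yI exy].
apply/independentP => /(_ x y); rewrite !inE eqxx yI orbT exy.
by move/(_ isT isT).
Qed.

Lemma hered_gap_le1P :
  hered_gap e <= 1 <->
  (forall S A I : {set T}, A \subset S -> independent e A ->
     maximal_independent_in e S I -> #|A| <= #|I| + 1).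
Proof.
split => [gap S A I AS indA maxI | bound].
  have alphaA : #|A| <= alpha_in e S by apply: leq_bigmax_cond; rewrite AS.
  have iI : i_in e S <= #|I|.
    by rewrite /i_in -minEnat -leEnat; apply: bigmin_le_cond.
  have : mu_in e S <= hered_gap e := leq_bigmax S.
  by rewrite /mu_in; lia.
apply/bigmax_leqP => S _; rewrite /mu_in leq_subLR.
apply/bigmax_leqP => A /andP [AS indA].
apply: (big_ind (fun m => #|A| <= m + 1)) => [||I /(bound _ _ _ AS indA) //].
  by rewrite (leq_trans (subset_leq_card AS)) ?leq_addr.
by move=> m1 m2; rewrite /minn; case: ifP.
Qed.

Lemma has_induced_seq (n : nat) (h : rel 'I_n) (s : seq T) (x0 : T) :
  symmetric h -> irreflexive h -> uniq s -> size s = n ->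
  (forall i j : 'I_n, i < j -> e (nth x0 s i) (nth x0 s j) = h i j) ->
  has_induced h e.
Proof.
move=> h_sym h_irr s_uniq s_size s_edges.
exists (fun i : 'I_n => nth x0 s i); split.
  by move=> i j /eqP; rewrite nth_uniq ?s_size // => /eqP /val_inj.
move=> i j; case: (ltngtP i j) => [ij | ji | /val_inj ->].
- exact: s_edges.
- by rewrite e_sym h_sym s_edges.
- by rewrite e_irr h_irr.
Qed.

Section Patterns.
Variable A : {set T}.
Hypothesis indA : independent e A.

Let nbhd x := [set a in A | e x a].

Lemma claw_of_nbhd_gt2 x : 2 < #|nbhd x| -> has_induced claw e.
Proof.
case/card_gt2P => [a [b [c [[]]]]]; rewrite !inE.
move=> /andP [aA xa] /andP [bA xb] /andP [cA xc] [ab bc ca].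
move/independentP: indA => ind.
have xy y : e x y -> x != y by apply: contraTneq => ->; rewrite e_irr.
apply: (@has_induced_seq 4 claw [:: x; a; b; c] x).
- by move=> i j; rewrite /claw orbC.
- by move=> i; rewrite /claw; case: eqP.
- by rewrite /= !inE !negb_or !xy // ab (eq_sym a) ca bc.
- by [].
case=> [[|[|[|[|i]]]] Hi] [[|[|[|[|j]]]] Hj] //= _;
  by rewrite /claw /= ?xa ?xb ?xc ?(negbTE (ind _ _ _ _)).
Qed.

Lemma nbhd_card2 x : #|nbhd x| = 2 -> x \notin A.
Proof.
move=> /eqP /cards2P [a [b [_ Nx]]]; apply/negP => xA.
have : a \in nbhd x by rewrite Nx !inE eqxx.
rewrite inE => /andP [aA].
by move/independentP: indA => /(_ x a xA aA) /negbTE ->.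
Qed.

Lemma twoP3_of_disjoint_nbhds u v :
  ~~ e u v -> #|nbhd u| = 2 -> #|nbhd v| = 2 -> [disjoint nbhd u & nbhd v] ->
  has_induced twoP3 e.
Proof.
move=> nuv Nu2 Nv2 disj.
have [uA vA] := (nbhd_card2 Nu2, nbhd_card2 Nv2).
move: Nu2 Nv2 => /eqP /cards2P [a1 [a2 [a12 Nu]]].
move=> /eqP /cards2P [b1 [b2 [b12 Nv]]].
have [Na1 Na2] : a1 \in nbhd u /\ a2 \in nbhd u by rewrite Nu !inE !eqxx orbT.
have [Nb1 Nb2] : b1 \in nbhd v /\ b2 \in nbhd v by rewrite Nv !inE !eqxx orbT.
have [va1 va2] := (disjointFr disj Na1, disjointFr disj Na2).
have [ub1 ub2] := (disjointFl disj Nb1, disjointFl disj Nb2).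
move: Na1 Na2 Nb1 Nb2 va1 va2 ub1 ub2; rewrite !inE.
move=> /andP [a1A ua1] /andP [a2A ua2] /andP [b1A vb1] /andP [b2A vb2].
rewrite a1A a2A b1A b2A /= => va1 va2 ub1 ub2.
move/independentP: indA => ind.
have neqA z w : z \in A -> w \notin A -> z != w.
  by move=> zA; apply: contraNneq => <-.
have neq_nbr z w : e v z = false -> e v w -> z != w.
  by move=> vz vw; apply: contraFneq vz => ->.
have uv : u != v by apply: contraFneq ub1 => ->.
apply: (@has_induced_seq 6 twoP3 [:: a1; u; a2; b1; v; b2] u) => //.
- by move=> [[|[|[|[|[|[|i]]]]]] ?] [[|[|[|[|[|[|j]]]]]] ?].
- by move=> [[|[|[|[|[|[|i]]]]]] ?].
- rewrite /= !inE !negb_or -!andbA; do !(apply/andP; split) => //;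
  by [apply: neqA | rewrite eq_sym; apply: neqA | apply: neq_nbr].
case=> [[|[|[|[|[|[|i]]]]]] Hi] [[|[|[|[|[|[|j]]]]]] Hj] //= _;
  by rewrite ?(e_sym a1) ?(e_sym a2) ?(e_sym b1) ?ua1 ?ua2 ?vb1 ?vb2
    ?va1 ?va2 ?ub1 ?ub2 ?(negbTE nuv) ?(negbTE (ind _ _ _ _)).
Qed.

Lemma card_le_maximal_independent_add1 (S I : {set T}) :
  ~ has_induced claw e -> ~ has_induced twoP3 e ->
  A \subset S -> maximal_independent_in e S I -> #|A| <= #|I| + 1.
Proof.
move=> clawF twoP3F AS /maximal_independentP [_ /independentP indI domI].
move/independentP: indA => ind.
suff : #|A :\: I| <= #|I :\: A| + 1.
  by rewrite -(cardsID I A) -(cardsID A I) setIC; lia.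
set X := I :\: A; set Y := A :\: I.
have dom y : y \in Y -> exists2 x, x \in X & e y x.
  move=> /setDP [yA yI].
  have /domI [x xI yx] : y \in S :\: I by rewrite inE yI (subsetP AS).
  by exists x; rewrite // inE xI andbT; apply: contraTN yx => xA; apply: ind.
pose f y := odflt y [pick x in X | e y x].
have fP y : y \in Y -> f y \in X /\ e y (f y).
  move=> /dom [x xX yx]; rewrite /f.
  case: pickP => [z /andP [zX yz] | /(_ x)] //=.
  by rewrite xX yx.
pose fiber x := [set y in Y | f y == x].
have fiber_nbhd x : fiber x \subset nbhd x.
  apply/subsetP => y; rewrite inE => /andP [yY /eqP <-].
  by have [_ yfy] := fP y yY; rewrite inE e_sym yfy andbT; case/setDP: yY.
have nbhd_le2 x : #|nbhd x| <= 2.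
  by rewrite leqNgt; apply/negP => /claw_of_nbhd_gt2.
have fiber_le2 x : #|fiber x| <= 2.
  exact: leq_trans (subset_leq_card (fiber_nbhd x)) (nbhd_le2 x).
have fiber_eq x : 1 < #|fiber x| -> fiber x = nbhd x.
  by move=> big; apply/eqP; rewrite eqEcard fiber_nbhd (leq_trans (nbhd_le2 x)).
have -> : #|Y| = \sum_(x in X) #|fiber x|.
  rewrite -sum1_card (partition_big f (mem X)) => [|y /fP []//].
  by apply: eq_bigr => x _; rewrite sum1dep_card.
apply: sum_le_card_add1 => // x1 x2 /setDP [x1I _] /setDP [x2I _] big1 big2.
apply/eqP; apply: contraT => x12; exfalso; apply: twoP3F.
apply: (@twoP3_of_disjoint_nbhds x1 x2); first exact: indI.
- by rewrite -fiber_eq //; apply/eqP; rewrite eqn_leq fiber_le2.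
- by rewrite -fiber_eq //; apply/eqP; rewrite eqn_leq fiber_le2.
rewrite -!fiber_eq // -setI_eq0; apply/eqP/setP => y; rewrite !inE.
by apply/negP => /and3P [/andP [_ /eqP ->] _]; apply/negP.
Qed.
End Patterns.

Lemma hered_gap_gt1_induced (V : finType) (h : rel V) (I A : {set V}) :
  has_induced h e -> independent h I -> independent h A ->
  {in ~: I, forall i, exists2 j, j \in I & h i j} -> #|I| + 2 <= #|A| ->
  1 < hered_gap e.
Proof.
move=> [f [finj fe]] indI indA domI card_IA.
have indf B : independent h B -> independent e (f @: B).
  move=> /independentP indB; apply/independentP.
  by move=> _ _ /imsetP [i iB ->] /imsetP [j jB ->]; rewrite fe; apply: indB.
have maxI : maximal_independent_in e (f @: setT) (f @: I).
  apply/maximal_independentP; split; [exact: imsetS (subsetT I) | exact: indf |].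
  move=> _ /setDP [/imsetP [i _ ->] fiI].
  have /domI [j jI ij] : i \in ~: I.
    by rewrite inE; apply: contra fiI; apply: imset_f.
  by exists (f j); [apply: imset_f | rewrite fe].
rewrite ltnNge; apply/negP => /hered_gap_le1P.
move=> /(_ _ _ _ (imsetS f (subsetT A)) (indf A indA) maxI).
by rewrite !card_imset //; lia.
Qed.

Lemma hered_gap_gt1_claw : has_induced claw e -> 1 < hered_gap e.
Proof.
move=> clawG; apply: (@hered_gap_gt1_induced _ _ [set ord0] [set~ ord0] clawG).
- by apply/independentP => i j; rewrite !inE => /eqP -> /eqP ->.
- apply/independentP => i j; rewrite !inE.
  by case: i j => [[|[|[|[|i]]]] Hi] [[|[|[|[|j]]]] Hj].
- move=> i; rewrite !inE.
  by case: i => [[|[|[|[|i]]]] Hi] //= _; exists ord0; rewrite ?inE.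
- by rewrite cards1 cardsC1 card_ord.
Qed.

Lemma hered_gap_gt1_twoP3 : has_induced twoP3 e -> 1 < hered_gap e.
Proof.
pose centres : {set 'I_6} := [set Ordinal (isT : 1 < 6); Ordinal (isT : 4 < 6)].
move=> twoP3G; apply: (@hered_gap_gt1_induced _ _ centres (~: centres) twoP3G).
- by apply/independentP => i j; rewrite !inE => /orP [] /eqP -> /orP [] /eqP ->.
- apply/independentP => i j; rewrite !inE.
  by case: i j => [[|[|[|[|[|[|i]]]]]] Hi] [[|[|[|[|[|[|j]]]]]] Hj].
- move=> i; rewrite !inE; case: i => [[|[|[|[|[|[|i]]]]]] Hi] //= _.
  1,2: by exists (Ordinal (isT : 1 < 6)); rewrite ?inE ?eqxx.
  1,2: by exists (Ordinal (isT : 4 < 6)); rewrite ?inE ?eqxx ?orbT.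
- by rewrite [#|~: _|]cardsCs setCK card_ord cards2.
Qed.
End Graphs.

Theorem mainTheorem10 (T : finType) (e : rel T)
  (e_sym : symmetric e) (e_irr : irreflexive e) :
  hered_gap e <= 1 <-> (~ has_induced claw e /\ ~ has_induced twoP3 e).
Proof.
split => [gap | [clawF twoP3F]].
  by split => [/(hered_gap_gt1_claw e_sym e_irr) | /(hered_gap_gt1_twoP3 e_sym e_irr)];
    rewrite ltnNge gap.
apply/hered_gap_le1P => S A I AS indA maxI.
exact: card_le_maximal_independent_add1 indA S I clawF twoP3F AS maxI.
Qed.
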